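(* Let $n\ge2$ and let $\mathcal{I}^{(k)}_{CCZ}$ be the set of channels $\rho\mapsto U\rho U^\dagger$ with $U=H^{\otimes n}DH^{\otimes n}$, where $D$ is a product of gates from $\{Z,CZ,CCZ\}$ (acting on arbitrary qubits) containing at most $k$ $CCZ$ gates. There is an absolute constant $C$ such that for every sample $S=(z_1,\ldots,z_m)$ with $z_i\in\mathbb{F}_2^n\times\mathbb{F}_2^n$, \[ \hat{R}_S(\mathcal{F}(\mathcal{I}^{(k)}_{CCZ}))\le\frac{C\,(n^2+k\log n)^{1/2}}{\sqrt m}\max_{\Phi\in\mathcal{I}^{(k)}_{CCZ}}\|\vec f_\Phi\|_\infty . \]
   Context: $H$ is the Hadamard gate, $Z=\mathrm{diag}(1,-1)$, $CZ$ the controlled-$Z$ gate, $CCZ$ the doubly controlled-$Z$ gate on three qubits. For a channel $\Phi$ on $n$ qubits, $f_\Phi(x,y)=\mathrm{Tr}[\Phi(|x\rangle\langle x|)\,|y\rangle\langle y|]$ for $x,y\in\mathbb{F}_2^n$; $\mathcal{F}(\Omega)=\{f_\Phi:\Phi\in\Omega\}$; $\vec f_\Phi=(f_\Phi(z_1),\ldots,f_\Phi(z_m))$. Empirical Rademacher complexity: $\hat{R}_S(\mathcal{G})=\mathbb{E}_{\epsilon}[\sup_{g\in\mathcal{G}}\frac1m\sum_i\epsilon_i g(z_i)]$, $\epsilon_i$ i.i.d. uniform on $\{\pm1\}$. *)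

From HB Require Import structures.
From mathcomp Require Import all_boot all_order all_algebra.
From mathcomp Require Import all_classical all_reals.
From mathcomp Require Import exp.
Set Implicit Arguments. Unset Strict Implicit. Unset Printing Implicit Defensive.
Import Order.TTheory GRing.Theory Num.Theory.
Local Open Scope ring_scope.
Local Open Scope classical_set_scope.

(* Computational basis states of n qubits: x in F_2^n. *)
Definition basis (n : nat) := {ffun 'I_n -> bool}.

(* All gates involved (H, Z, CZ, CCZ) have real entries, so real matrices suffice;
   the adjoint of a real matrix is its transpose. *)
Definition op (R : realType) (n : nat) := basis n -> basis n -> R.

Section Ops.
Variables (R : realType) (n : nat).
Definition mmul (A B : op R n) : op R n := fun x y => \sum_(z : basis n) A x z * B z y.
Definition adj (A : op R n) : op R n := fun x y => A y x.
Definition idop : op R n := fun x y => (x == y)%:R.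
Definition trace (A : op R n) : R := \sum_(x : basis n) A x x.
Definition proj (x : basis n) : op R n := fun a b => ((a == x) && (b == x))%:R.

Definition had1 (a b : bool) : R := (-1) ^+ (a && b) / Num.sqrt 2.
(* H^{\otimes n}: Kronecker product entries are products of the factor entries *)
Definition hadn : op R n := fun x y => \prod_(i < n) had1 (x i) (y i).

Inductive gate := GZ of 'I_n | GCZ of 'I_n & 'I_n | GCCZ of 'I_n & 'I_n & 'I_n.
Definition gate_ok (g : gate) : bool :=
  match g with
  | GZ _ => true
  | GCZ i j => i != j
  | GCCZ i j l => [&& i != j, i != l & j != l]
  end.
Definition is_ccz (g : gate) : bool := if g is GCCZ _ _ _ then true else false.
Definition gphase (g : gate) (x : basis n) : R :=
  match g with
  | GZ i => (-1) ^+ (x i)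
  | GCZ i j => (-1) ^+ (x i && x j)
  | GCCZ i j l => (-1) ^+ [&& x i, x j & x l]
  end.
Definition gmat (g : gate) : op R n := fun x y => (x == y)%:R * gphase g x.
Definition circ (gs : seq gate) : op R n := foldr (fun g A => mmul (gmat g) A) idop gs.

Definition uchan (U : op R n) : op R n -> op R n := fun rho => mmul (mmul U rho) (adj U).

Definition I_CCZ (k : nat) : set (op R n -> op R n) :=
  [set Phi | exists gs : seq gate,
     [/\ all gate_ok gs, (count is_ccz gs <= k)%N &
         Phi = uchan (mmul (mmul hadn (circ gs)) hadn)]].

Definition fPhi (Phi : op R n -> op R n) (z : basis n * basis n) : R :=
  trace (mmul (Phi (proj z.1)) (proj z.2)).

Definition Fset (Omega : set (op R n -> op R n)) : set (basis n * basis n -> R) :=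
  [set f | exists2 Phi, Omega Phi & f = fPhi Phi].
End Ops.

(* empirical Rademacher complexity, eps uniform on {+-1}^m (eps_i = (-1)^(b_i)) *)
Definition rademacher (R : realType) (T : Type) (m : nat) (S : 'I_m -> T)
  (G : set (T -> R)) : R :=
  (2 ^+ m)^-1 * \sum_(b : {ffun 'I_m -> bool})
     sup [set (m%:R)^-1 * \sum_(i < m) (-1) ^+ (b i) * g (S i) | g in G].

Definition linf (R : realType) (T : Type) (m : nat) (S : 'I_m -> T) (f : T -> R) : R :=
  \big[Num.max/0]_(i < m) `|f (S i)|.

From HB Require Import structures.
From mathcomp Require Import all_boot all_order all_algebra.
From mathcomp Require Import all_classical all_reals.
From mathcomp Require Import sequences exp.
From mathcomp Require Import lra ring zify.
Set Implicit Arguments. Unset Strict Implicit. Unset Printing Implicit Defensive.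
Import Order.TTheory GRing.Theory Num.Theory.
Local Open Scope ring_scope.
Local Open Scope classical_set_scope.

(* The proof is Massart's finite class lemma plus a counting argument.
   1. Massart: if every function of a class G is one of the functions f_t,
      t in a finite type T, and |g(z_i)| <= M on the sample, then
      R_S(G) <= 2 M sqrt(2 ln|T| / m).  It follows from Jensen's inequality
      for expR, Hoeffding's bound cosh x <= expR(2 x^2) for each Rademacher
      sign, and an optimisation over the temperature lam.
   2. Encoding: a product D of Z, CZ, CCZ gates is the diagonal operator
      x |-> (-1)^p(x), where p is an F_2 polynomial made of a quadratic part
      (one bit per pair (i, j), covering Z and CZ) and at most k cubic
      monomials (one per CCZ gate).  Hence the channel, and so f_Phi, is
      determined by a code in a finite set of size 2^(n^2) (n^3 + 1)^k,
      whose logarithm is at most 4 (n^2 + k ln n).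
   3. The theorem follows with C = 6, taking for M the supremum of the
      sample sup norms over the class. *)

Section Massart.
Variable R : realType.
Implicit Types x lam : R.

Lemma expR_mean_le (I : finType) (F : I -> R) : (0 < #|I|)%N ->
  expR (#|I|%:R^-1 * \sum_i F i) <= #|I|%:R^-1 * \sum_i expR (F i).
Proof.
move=> I_gt0; set N : R := #|I|%:R; set c := N^-1 * _.
have N_gt0 : 0 < N by rewrite /N ltr0n.
have tangent i : expR c * (1 + (F i - c)) <= expR (F i).
  have -> : F i = c + (F i - c) by ring.
  rewrite expRD ler_wpM2l ?expR_ge0 //.
  have -> : c + (F i - c) - c = F i - c by ring.
  exact: expR_ge1Dx.
have : \sum_i expR c * (1 + (F i - c)) <= \sum_i expR (F i).
  by apply: ler_sum => i _; exact: tangent.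
have sum_c : \sum_(i : I) c = N * c by rewrite sumr_const -mulr_natl.
have sum_1 : \sum_(i : I) (1 : R) = N by rewrite sumr_const.
have sum_F : \sum_i F i = N * c by rewrite /c mulrA mulfV ?mul1r // gt_eqF.
rewrite -mulr_sumr big_split /= sum_1 big_split /= sumrN sum_c sum_F.
have -> : N + (N * c - N * c) = N by ring.
by move=> h; rewrite ler_pdivlMl // mulrC.
Qed.

(* Second-order upper bound on expR, valid away from the pole of 1/(1-x). *)
Lemma expR_le_quad x : x <= 1/2 -> expR x <= 1 + x + 2 * x ^+ 2.
Proof.
move=> x_le.
have pos : 0 < 1 - x by lra.
have lower : 1 - x <= expR (- x) by have := expR_ge1Dx (- x); lra.
rewrite -[expR x]invrK -expRN.
apply: (@le_trans _ _ (1 - x)^-1); first by rewrite lef_pV2 ?posrE ?expR_gt0.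
rewrite -[(1 - x)^-1]mul1r ler_pdivrMr //.
have : 0 <= x ^+ 2 * (1 - 2 * x) by apply: mulr_ge0; [exact: sqr_ge0 | lra].
nra.
Qed.

Lemma cosh_le_expR x : (expR x + expR (- x)) / 2 <= expR (2 * x ^+ 2).
Proof.
have [small|large] := lerP `|x| (1/2).
  have hx : x <= 1/2 by have := ler_norm x; lra.
  have hNx : - x <= 1/2 by have := ler_norm (- x); rewrite normrN; lra.
  have e1 := expR_le_quad hx; have e2 := expR_le_quad hNx.
  have e3 := expR_ge1Dx (2 * x ^+ 2).
  rewrite sqrrN in e2; lra.
have ha : expR x <= expR `|x| by rewrite ler_expR ler_norm.
have hb : expR (- x) <= expR `|x| by rewrite ler_expR -normrN ler_norm.
have hc : expR `|x| <= expR (2 * x ^+ 2).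
  rewrite ler_expR -real_normK ?num_real //.
  have : 0 <= `|x| by []; nra.
lra.
Qed.

Lemma rademacher_mgf_le (m : nat) (a : 'I_m -> R) (lam M : R) : (0 < m)%N ->
  0 <= lam -> (forall i, `|a i| <= M) ->
  (2 ^+ m)^-1 * \sum_(b : {ffun 'I_m -> bool})
     expR (lam * (m%:R^-1 * \sum_(i < m) (-1) ^+ (b i) * a i))
  <= expR (2 * lam ^+ 2 * M ^+ 2 / m%:R).
Proof.
move=> m_gt0 lam_ge0 a_le.
pose c i := lam * m%:R^-1 * a i.
have factor (b : {ffun 'I_m -> bool}) :
    expR (lam * (m%:R^-1 * \sum_(i < m) (-1) ^+ (b i) * a i))
    = \prod_(i < m) expR ((-1) ^+ (b i) * c i).
  rewrite mulr_sumr mulr_sumr expR_sum; apply: eq_bigr => i _.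
  by congr expR; rewrite /c; ring.
rewrite (eq_bigr _ (fun b _ => factor b)).
rewrite -(bigA_distr_bigA (fun (i : 'I_m) (j : bool) => expR ((-1) ^+ j * c i))) /=.
have -> : (2 ^+ m)^-1 = \prod_(i < m) (2 : R)^-1.
  by rewrite prodr_const card_ord exprVn.
rewrite -big_split /=.
apply: (@le_trans _ _ (\prod_(i < m) expR (2 * (lam * m%:R^-1 * M) ^+ 2))).
  apply: ler_prod => i _; rewrite big_bool /= expr1 expr0 mul1r mulN1r.
  apply/andP; split.
    by apply: mulr_ge0; [rewrite invr_ge0 | apply: addr_ge0; exact: expR_ge0].
  rewrite mulrC addrC; apply: (le_trans (cosh_le_expR _)).
  rewrite ler_expR /c.
  have s_ge0 : 0 <= lam * m%:R^-1 by apply: mulr_ge0; rewrite ?invr_ge0.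
  have ai_sq : a i ^+ 2 <= M ^+ 2.
    rewrite -real_normK ?num_real //; have := a_le i.
    have : 0 <= `|a i| by []; nra.
  rewrite !exprMn; have : 0 <= (lam * m%:R^-1) ^+ 2 by exact: sqr_ge0.
  rewrite exprMn; nra.
rewrite prodr_const card_ord -expRM_natl ler_expR.
have m_neq0 : m%:R != 0 :> R by rewrite pnatr_eq0 -lt0n.
by rewrite le_eqVlt; apply/orP; left; apply/eqP; field.
Qed.

(* Minimizing (L + K lam^2) / lam over lam > 0. *)
Lemma le_optimized_linear (mu L K : R) : 0 < L -> 0 <= K ->
  (forall lam, 0 < lam -> lam * mu <= L + K * lam ^+ 2) ->
  mu <= 2 * Num.sqrt (L * K).
Proof.
move=> L_gt0 K_ge0 bound.
have [K0|K_gt0] := eqVneq K 0.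
  rewrite K0 mulr0 sqrtr0 mulr0 leNgt; apply/negP => mu_gt0.
  have := bound (2 * L / mu) (divr_gt0 (mulr_gt0 (ltr0Sn _ 1) L_gt0) mu_gt0).
  by rewrite K0 mul0r addr0 divfK ?gt_eqF //; lra.
have K_pos : 0 < K by rewrite lt_neqAle eq_sym K_gt0.
have LK_gt0 : 0 < L * K by exact: mulr_gt0.
set s := Num.sqrt (L * K).
have s_gt0 : 0 < s by rewrite sqrtr_gt0.
have s_sq : s ^+ 2 = L * K by rewrite sqr_sqrtr // ltW.
have lam_gt0 : 0 < s / K by exact: divr_gt0.
have := bound _ lam_gt0.
have -> : L + K * (s / K) ^+ 2 = 2 * L.
  by rewrite expr_div_n s_sq; field; rewrite gt_eqF.
rewrite mulrC -ler_pdivlMr // => h; apply: (le_trans h).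
rewrite le_eqVlt; apply/orP; left; apply/eqP.
have -> : L = s ^+ 2 / K by rewrite s_sq mulfK ?gt_eqF.
by field; rewrite !gt_eqF.
Qed.

Section FiniteClass.
Variables (m : nat) (T : finType) (P : pred T) (a : T -> 'I_m -> R).
Variables (X : {ffun 'I_m -> bool} -> R) (M : R).
Hypothesis m_gt0 : (0 < m)%N.
Hypothesis a_le : forall t i, P t -> `|a t i| <= M.
Hypothesis X_le : forall b : {ffun 'I_m -> bool},
  exists2 t, P t & X b <= m%:R^-1 * \sum_(i < m) (-1) ^+ (b i) * a t i.

Let mean_X := (2 ^+ m)^-1 * \sum_(b : {ffun 'I_m -> bool}) X b.

Lemma massart_exponential lam : 0 < lam ->
  lam * mean_X <= ln (#|T|%:R) + 2 * M ^+ 2 / m%:R * lam ^+ 2.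
Proof.
move=> lam_gt0; set Q := 2 * lam ^+ 2 * M ^+ 2 / m%:R.
have [t0 Pt0 _] := X_le [ffun => false].
have T_gt0 : 0 < #|T|%:R :> R by rewrite ltr0n; apply/card_gt0P; exists t0.
have card_signs : #|{ffun 'I_m -> bool}| = (2 ^ m)%N.
  by rewrite card_ffun card_bool card_ord.
have jensen := @expR_mean_le _ (fun b : {ffun 'I_m -> bool} => lam * X b).
rewrite card_signs natrX expn_gt0 /= -mulr_sumr in jensen.
have union : \sum_(b : {ffun 'I_m -> bool}) expR (lam * X b) <=
    \sum_(b : {ffun 'I_m -> bool}) \sum_(t | P t)
      expR (lam * (m%:R^-1 * \sum_(i < m) (-1) ^+ (b i) * a t i)).
  apply: ler_sum => b _; have [t Pt Xb] := X_le b.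
  rewrite (bigD1 t) //= -[X in X <= _]addr0 lerD //; last first.
    by apply: sumr_ge0 => *; exact: expR_ge0.
  by rewrite ler_expR ler_wpM2l // ltW.
have per_vector : \sum_(t | P t) (2 ^+ m)^-1 * \sum_(b : {ffun 'I_m -> bool})
    expR (lam * (m%:R^-1 * \sum_(i < m) (-1) ^+ (b i) * a t i))
    <= #|T|%:R * expR Q.
  apply: (@le_trans _ _ (\sum_(t : T) expR Q)); last by rewrite sumr_const mulr_natl.
  rewrite big_mkcond /=; apply: ler_sum => t _.
  case: ifP => Pt; last exact: expR_ge0.
  by apply: rademacher_mgf_le => //; [exact: ltW | move=> i; exact: a_le].
have mgf : expR (lam * mean_X) <= #|T|%:R * expR Q.
  have -> : lam * mean_X = (2 ^+ m)^-1 * (lam * \sum_b X b) by rewrite /mean_X; ring.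
  apply: (le_trans (jensen isT)); apply: le_trans per_vector.
  rewrite exchange_big /= in union.
  by rewrite -mulr_sumr ler_wpM2l // invr_ge0 exprn_ge0.
rewrite -[lam * mean_X]expRK.
apply: (@le_trans _ _ (ln (#|T|%:R * expR Q))).
  by rewrite ler_ln ?posrE ?mulr_gt0 ?expR_gt0.
rewrite lnM ?posrE ?expR_gt0 // expRK lerD2l /Q.
by rewrite le_eqVlt; apply/orP; left; apply/eqP; ring.
Qed.

Lemma massart (L : R) : ln (#|T|%:R) <= L -> 0 < L ->
  mean_X <= 2 * M * Num.sqrt (2 * L / m%:R).
Proof.
move=> card_le L_gt0.
have [t0 Pt0 _] := X_le [ffun => false].
have M_ge0 : 0 <= M by apply: le_trans (a_le (Ordinal m_gt0) Pt0).
have m_gt0R : 0 < m%:R :> R by rewrite ltr0n.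
have K_ge0 : 0 <= 2 * M ^+ 2 / m%:R by rewrite divr_ge0 ?mulr_ge0 ?sqr_ge0.
have := @le_optimized_linear mean_X L _ L_gt0 K_ge0.
have -> : L * (2 * M ^+ 2 / m%:R) = M ^+ 2 * (2 * L / m%:R) by ring.
rewrite sqrtrM ?sqr_ge0 // sqrtr_sqr ger0_norm // mulrA; apply=> lam lam_gt0.
by apply: le_trans (massart_exponential lam_gt0) _; rewrite lerD2r.
Qed.

End FiniteClass.
End Massart.

Lemma rademacher_finite_class (R : realType) (D : Type) (m : nat)
    (S : 'I_m -> D) (T : finType) (f : T -> D -> R) (G : set (D -> R)) (M L : R) :
  (0 < m)%N -> G !=set0 -> G `<=` range f ->
  (forall g i, G g -> `|g (S i)| <= M) ->
  ln (#|T|%:R) <= L -> 0 < L ->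
  rademacher S G <= 2 * M * Num.sqrt (2 * L / m%:R).
Proof.
move=> m_gt0 [g0 Gg0] G_sub g_le card_le L_gt0.
have [t0 _ ft0] := G_sub g0 Gg0.
pose P : pred T := fun t => `[< G (f t) >].
pose corr (g : D -> R) (b : {ffun 'I_m -> bool}) :=
  m%:R^-1 * \sum_(i < m) (-1) ^+ (b i) * g (S i).
have Pt0 : P t0 by apply/asboolP; rewrite ft0.
apply: (massart (P := P) (a := fun t i => f t (S i))
          (X := fun b => sup [set corr g b | g in G])) => //.
  by move=> t i /asboolP; exact: g_le.
move=> b; have [t_best P_best best_max] := arg_maxP (fun t => corr (f t) b) Pt0.
exists t_best => //; apply: ge_sup; first by exists (corr g0 b), g0.
move=> _ [g Gg <-]; have [t _ ft] := G_sub g Gg.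
by rewrite -ft; apply: best_max; apply/asboolP; rewrite ft.
Qed.

Section Encoding.
Variables (R : realType) (n : nat).

Definition gate_bit (g : gate n) (x : basis n) : bool :=
  match g with
  | GZ i => x i
  | GCZ i j => x i && x j
  | GCCZ i j l => [&& x i, x j & x l]
  end.

Lemma gphaseE (g : gate n) (x : basis n) : gphase R g x = (-1) ^+ gate_bit g x.
Proof. by case: g. Qed.

Definition circ_parity (gs : seq (gate n)) (x : basis n) : bool :=
  foldr (fun g b => gate_bit g x (+) b) false gs.

Lemma circE (gs : seq (gate n)) (x y : basis n) :
  circ R gs x y = (x == y)%:R * (-1) ^+ circ_parity gs x.
Proof.
elim: gs x y => [|g gs IH] x y /=; first by rewrite /idop mulr1.
rewrite /mmul (bigD1 x) //= big1 => [|z /negbTE z_neq]; last first.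
  by rewrite /gmat eq_sym z_neq !mul0r.
by rewrite addr0 /gmat eqxx mul1r IH gphaseE signr_addb; ring.
Qed.

(* Quadratic part: a coefficient for each monomial x_i x_j (x_i x_i = x_i
   accounts for the Z gates). *)
Definition quad_form (c : {ffun 'I_n * 'I_n -> bool}) (x : basis n) : bool :=
  \big[addb/false]_(p : 'I_n * 'I_n) (c p && (x p.1 && x p.2)).

Definition flip_coef (c : {ffun 'I_n * 'I_n -> bool}) (p : 'I_n * 'I_n) :=
  [ffun q => c q (+) (q == p)].

Lemma quad_form0 (x : basis n) : quad_form [ffun => false] x = false.
Proof. by rewrite /quad_form big1 // => p _; rewrite ffunE. Qed.

Lemma quad_form_flip c p (x : basis n) :
  quad_form (flip_coef c p) x = (x p.1 && x p.2) (+) quad_form c x.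
Proof.
rewrite /quad_form (eq_bigr (fun q => (c q && (x q.1 && x q.2))
                                  (+) ((q == p) && (x q.1 && x q.2)))); last first.
  by move=> q _; rewrite ffunE; case: (c q); case: (q == p); case: (x q.1 && x q.2).
by rewrite big_split /= addbC (bigD1 p) //= eqxx big1 ?addbF // => q /negbTE ->.
Qed.

Definition quad_coefs (gs : seq (gate n)) : {ffun 'I_n * 'I_n -> bool} :=
  foldr (fun g c => match g with
                    | GZ i => flip_coef c (i, i)
                    | GCZ i j => flip_coef c (i, j)
                    | GCCZ _ _ _ => c
                    end) [ffun => false] gs.

Definition triple := ('I_n * 'I_n * 'I_n)%type.
Definition ccz_triple (g : gate n) : option triple :=
  if g is GCCZ i j l then Some (i, j, l) else None.
Definition cubic_monomial (t : triple) (x : basis n) : bool :=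
  [&& x t.1.1, x t.1.2 & x t.2].
Definition cubic_parity (ts : seq triple) (x : basis n) : bool :=
  foldr (fun t b => cubic_monomial t x (+) b) false ts.

Lemma circ_parity_split (gs : seq (gate n)) (x : basis n) :
  circ_parity gs x = quad_form (quad_coefs gs) x (+) cubic_parity (pmap ccz_triple gs) x.
Proof.
elim: gs => [|g gs IH] /=; first by rewrite quad_form0.
case: g => [i|i j|i j l] /=; rewrite ?quad_form_flip /= ?andbb IH.
- exact: addbA.
- exact: addbA.
- by rewrite /cubic_monomial addbCA.
Qed.

Lemma size_ccz_triples (gs : seq (gate n)) :
  size (pmap ccz_triple gs) = count (@is_ccz n) gs.
Proof. by elim: gs => [|g gs IH] //; case: g => * /=; rewrite IH. Qed.

(* With at most k CCZ gates the cubic part fits into k optional slots. *)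
Definition slot_monomial (o : option triple) (x : basis n) : bool :=
  if o is Some t then cubic_monomial t x else false.
Definition cubic_form (k : nat) (c : {ffun 'I_k -> option triple}) (x : basis n) :=
  \big[addb/false]_(s < k) slot_monomial (c s) x.
Definition cubic_coefs (k : nat) (ts : seq triple) : {ffun 'I_k -> option triple} :=
  [ffun s : 'I_k => nth None (map Some ts) s].

Lemma cubic_form_coefs (k : nat) (ts : seq triple) (x : basis n) :
  (size ts <= k)%N -> cubic_form (cubic_coefs k ts) x = cubic_parity ts x.
Proof.
elim: ts k => [|t ts IH] k /=.
  by move=> _; rewrite /cubic_form big1 // => s _; rewrite ffunE nth_nil.
case: k => [//|k] size_le.
rewrite /cubic_form big_ord_recl ffunE /=; congr (_ (+) _).
by rewrite -(IH k size_le); apply: eq_bigr => s _; rewrite !ffunE.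
Qed.

Definition phase_code (k : nat) :=
  ({ffun 'I_n * 'I_n -> bool} * {ffun 'I_k -> option triple})%type.
Definition code_diag (k : nat) (c : phase_code k) : op R n :=
  fun x y => (x == y)%:R * (-1) ^+ (quad_form c.1 x (+) cubic_form c.2 x).
Definition code_fun (k : nat) (c : phase_code k) : basis n * basis n -> R :=
  fPhi (uchan (mmul (mmul (@hadn R n) (code_diag c)) (@hadn R n))).
Definition code_of (k : nat) (gs : seq (gate n)) : phase_code k :=
  (quad_coefs gs, cubic_coefs k (pmap ccz_triple gs)).

Lemma circ_code (k : nat) (gs : seq (gate n)) :
  (count (@is_ccz n) gs <= k)%N -> circ R gs = code_diag (code_of k gs).
Proof.
move=> count_le; apply/funext => x; apply/funext => y.
by rewrite circE /code_diag /= circ_parity_split cubic_form_coefs // size_ccz_triples.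
Qed.

Lemma Fset_I_CCZ_sub (k : nat) : Fset (I_CCZ k) `<=` range (@code_fun k).
Proof.
move=> _ [_ [gs [_ count_le ->]] ->]; exists (code_of k gs) => //.
by rewrite /code_fun (circ_code count_le).
Qed.

Lemma card_code (k : nat) :
  #|{: phase_code k}| = (2 ^ (n * n) * (n * n * n).+1 ^ k)%N.
Proof. by rewrite card_prod !card_ffun card_bool card_option !card_prod !card_ord. Qed.

End Encoding.

Lemma ln_card_codes_le (R : realType) (n k : nat) : (2 <= n)%N ->
  ln ((2 ^ (n * n) * (n * n * n).+1 ^ k)%N%:R : R) <=
  4 * (n%:R ^+ 2 + k%:R * ln (n%:R)).
Proof.
move=> n_ge2.
have n_ge2R : (2 : R) <= n%:R by rewrite (ler_nat R 2 n).
have ln_n_ge0 : 0 <= ln (n%:R : R) by apply: ln_ge0; lra.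
have cube_le : ((n * n * n).+1 <= n ^ 4)%N.
  have : (2 * (n * n * n) <= n * (n * n * n))%N by rewrite leq_mul2r n_ge2 orbT.
  have : (0 < n * n * n)%N by rewrite !muln_gt0 (leq_trans _ n_ge2).
  rewrite (_ : n ^ 4 = n * (n * n * n))%N; last by rewrite !expnS expn0 muln1 !mulnA.
  move: (n * (n * n * n))%N (n * n * n)%N => A B; lia.
have ln2_le1 : ln (2 : R) <= 1.
  have := @le_ln1Dx R 1; rewrite (_ : 1 + 1 = 2 :> R); last by []; apply; lra.
have ln_cube_le : ln ((n * n * n).+1%:R : R) <= 4 * ln (n%:R : R).
  have n_gt0 : 0 < n%:R :> R by lra.
  rewrite mulr_natl -lnXn // ler_ln ?posrE ?ltr0n ?exprn_gt0 //.
  by rewrite -natrX ler_nat.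
rewrite natrM !natrX lnM ?posrE ?exprn_gt0 ?ltr0n ?expn_gt0 //.
rewrite !lnXn ?ltr0n // -[ln 2 *+ _]mulr_natl -[ln _ *+ k]mulr_natl natrM -expr2.
have e1 : k%:R * ln ((n * n * n).+1%:R : R) <= 4 * (k%:R * ln (n%:R : R)).
  by rewrite mulrCA ler_wpM2l.
have e2 : (n%:R : R) ^+ 2 * ln 2 <= (n%:R : R) ^+ 2.
  by rewrite -[X in _ <= X]mulr1 ler_wpM2l // sqr_ge0.
have e3 : 0 <= k%:R * ln (n%:R : R) by apply: mulr_ge0.
have e4 : 0 <= (n%:R : R) ^+ 2 by exact: sqr_ge0.
lra.
Qed.

Lemma linf_ge0 (R : realType) (T : Type) (m : nat) (S : 'I_m -> T) (f : T -> R) :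
  0 <= linf S f.
Proof. by rewrite /linf; elim/big_ind: _ => // x y hx hy; rewrite le_max hx. Qed.

Lemma le_linf (R : realType) (T : Type) (m : nat) (S : 'I_m -> T) (f : T -> R) i :
  `|f (S i)| <= linf S f.
Proof. exact: (le_bigmax 0 (fun i => `|f (S i)|) i). Qed.

Lemma sqrt_8Z_le (R : realType) (Z m : R) : 0 <= Z -> 0 <= m ->
  Num.sqrt (2 * (4 * Z) / m) <= 3 * Num.sqrt Z / Num.sqrt m.
Proof.
move=> Z_ge0 m_ge0.
rewrite mulrA -(natrM _ 2 4) sqrtrM ?mulr_ge0 // sqrtrM // sqrtrV //.
rewrite ler_wpM2r ?invr_ge0 ?sqrtr_ge0 // ler_wpM2r ?sqrtr_ge0 //.
have -> : (3 : R) = Num.sqrt (3 ^+ 2) by rewrite sqrtr_sqr ger0_norm.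
by rewrite ler_sqrt ?sqr_ge0 // expr2 -natrM ler_nat.
Qed.

Theorem mainTheorem9 (R : realType) :
  exists C : R, forall (n k m : nat) (S : 'I_m -> basis n * basis n),
    (2 <= n)%N -> (0 < m)%N ->
    rademacher S (Fset (@I_CCZ R n k)) <=
      C * Num.sqrt ((n%:R) ^+ 2 + k%:R * ln (n%:R)) / Num.sqrt (m%:R) *
      sup [set linf S (fPhi Phi) | Phi in @I_CCZ R n k].
Proof.
exists 6 => n k m S n_ge2 m_gt0.
set Z := _ + _; set M := sup _.
have Z_gt0 : 0 < Z.
  have n_ge2R : (2 : R) <= n%:R by rewrite (ler_nat R 2 n).
  have : 0 <= k%:R * ln (n%:R : R).
    by apply: mulr_ge0 => //; apply: ln_ge0; rewrite (ler_nat R 1 n) ltnW.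
  by rewrite /Z; nra.
have class_fin := @Fset_I_CCZ_sub R n k.
pose Phi0 := uchan (mmul (mmul (@hadn R n) (circ R [::])) (@hadn R n)).
have Phi0_in : @I_CCZ R n k Phi0 by exists [::].
have class_ne : Fset (@I_CCZ R n k) !=set0 by exists (fPhi Phi0), Phi0.
have linf_bounded : has_ubound [set linf S (fPhi Phi) | Phi in @I_CCZ R n k].
  exists (\sum_(c : phase_code n k) linf S (code_fun R c)) => _ [Phi Phi_in <-].
  have [c _ <-] := class_fin _ (ex_intro2 _ _ Phi Phi_in erefl).
  rewrite (bigD1 c) //= lerDl; apply: sumr_ge0 => *; exact: linf_ge0.
have class_le : forall g i, Fset (@I_CCZ R n k) g -> `|g (S i)| <= M.
  move=> _ i [Phi Phi_in ->]; apply: le_trans (le_linf S _ i) _.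
  by apply: ub_le_sup => //; exists Phi.
have card_le := @ln_card_codes_le R n k n_ge2; rewrite -card_code in card_le.
have M_ge0 : 0 <= M.
  by have [g g_in] := class_ne; apply: le_trans (class_le g (Ordinal m_gt0) g_in).
apply: le_trans (rademacher_finite_class m_gt0 class_ne class_fin class_le card_le _) _.
  by rewrite mulr_gt0.
have bound := @sqrt_8Z_le R Z m%:R (ltW Z_gt0) (ler0n _ _).
rewrite -/Z [leRHS](_ : _ = 2 * M * (3 * Num.sqrt Z / Num.sqrt m%:R)); last by ring.
by rewrite ler_wpM2l // mulr_ge0.
Qed.
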